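(* Let $q$ be a positive integer, $0\leq\alpha<1$ and $\tau>0$. Then there exists a constant $C=C(\tau,\alpha)>0$ with the following property. Let $(a_j)_{j=q}^\infty$ be a nondecreasing sequence of positive real numbers and $$b_j=\begin{cases}\tau j^{1/\alpha}, & \alpha>0,\\ e^{\tau j}, & \alpha=0.\end{cases}$$ Suppose $j+1\leq a_j\leq b_j$ for all $j=q,q+1,q+2,\dots$. Then there exists an integer $k\geq q$ such that $$a_{k+1}-a_k\leq C(a_k-k)^{1-\alpha}.$$ *)

From Stdlib Require Import Reals Lra Lia.
Open Scope R_scope.

Definition bseq (tau alpha : R) (j : nat) : R :=
  if Rlt_dec 0 alpha then tau * Rpower (INR j) (1 / alpha)
  else exp (tau * INR j).

From Stdlib Require Import Reals Lra Lia Classical.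
Open Scope R_scope.

(* Put c_k = a_k - k >= 1 and suppose every jump exceeds C c_k^(1-alpha).  Then
   c_(k+1) >= c_k + (C - 1) c_k^(1-alpha).  For alpha > 0 and C large enough this
   makes c_k^alpha grow by 2 tau^alpha per step, so c_(2q)^alpha > 2q tau^alpha,
   contradicting a_(2q) <= tau (2q)^(1/alpha).  For alpha = 0 and C = e^(2 tau),
   ln c_k grows by 2 tau per step, so ln c_(2q+1) > tau (2q+1), contradicting
   a_(2q+1) <= e^(tau (2q+1)). *)

Lemma exp_le_exp x y : x <= y -> exp x <= exp y.
Proof. intros [Hlt | ->]; [left; apply exp_increasing | right]; auto. Qed.

Lemma ln_le x y : 0 < x -> x <= y -> ln x <= ln y.
Proof. intros Hx [Hlt | ->]; [left; apply ln_increasing | right]; auto. Qed.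

Lemma exp_le_1_plus_mul_exp z : 0 <= z -> exp z <= 1 + z * exp z.
Proof.
  intros Hz. pose proof (exp_pos z).
  assert (Hinv : 1 - z <= / exp z) by (rewrite <- exp_Ropp; apply exp_ineq1_le).
  assert ((1 - z) * exp z <= 1).
  { apply Rle_trans with (/ exp z * exp z); [apply Rmult_le_compat_r; lra|].
    rewrite Rinv_l; lra. }
  lra.
Qed.

Lemma ln_1_plus_le y : -1 < y -> ln (1 + y) <= y.
Proof.
  intros Hy. rewrite <- (ln_exp y) at 2.
  apply ln_le; [lra | apply exp_ineq1_le].
Qed.

Lemma Rpower_1_plus_le p y : 0 <= p -> -1 < y -> Rpower (1 + y) p <= exp (p * y).
Proof.
  intros Hp Hy. apply exp_le_exp.
  apply Rmult_le_compat_l; [lra | apply ln_1_plus_le; lra].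
Qed.

Lemma Rpower_pos x e : 0 < Rpower x e.
Proof. apply exp_pos. Qed.

Lemma Rpower_ge_1 x e : 1 <= x -> 0 <= e -> 1 <= Rpower x e.
Proof. intros Hx He. rewrite <- (Rpower_O x) by lra. apply Rle_Rpower; lra. Qed.

(* With [v = c^al] and [y = E/v <= E]: [(v + E)^(1/al) = c (1 + y)^(1/al)] and
   [(1 + y)^p <= exp (p y) <= 1 + p y exp (p E)]. *)
Lemma Rpower_increment al E c c' : 0 < al -> 0 < E -> 1 <= c ->
  c + E / al * exp (E / al) * Rpower c (1 - al) <= c' ->
  Rpower c al + E <= Rpower c' al.
Proof.
  intros Hal HE Hc Hc'.
  set (p := / al). set (v := Rpower c al). set (y := E / v).
  assert (Hp : 0 < p) by (apply Rinv_0_lt_compat; lra).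
  assert (Hv : 1 <= v) by (apply Rpower_ge_1; lra).
  assert (Hy : 0 < y <= E).
  { split; [apply Rdiv_lt_0_compat; lra|].
    unfold y, Rdiv. rewrite <- (Rmult_1_r E) at 2.
    apply Rmult_le_compat_l; [lra|]. rewrite <- Rinv_1. apply Rinv_le_contravar; lra. }
  assert (Hvp : Rpower v p = c).
  { unfold v. rewrite Rpower_mult, Rinv_r, Rpower_1; lra. }
  assert (Hcv : c = Rpower c (1 - al) * v).
  { unfold v. rewrite <- Rpower_plus. replace (1 - al + al) with 1 by ring.
    rewrite Rpower_1; lra. }
  assert (Hroot : Rpower (v + E) p <= c').
  { replace (v + E) with (v * (1 + y)) by (unfold y; field; lra).
    rewrite <- Rpower_mult_distr, Hvp by lra.
    assert (Hgrow : Rpower (1 + y) p <= 1 + p * y * exp (p * E)).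
    { apply Rle_trans with (exp (p * y)); [apply Rpower_1_plus_le; lra|].
      apply Rle_trans with (1 + p * y * exp (p * y)); [apply exp_le_1_plus_mul_exp; nra|].
      apply Rplus_le_compat_l, Rmult_le_compat_l; [nra|].
      apply exp_le_exp; nra. }
    apply Rle_trans with (c * (1 + p * y * exp (p * E))); [apply Rmult_le_compat_l; lra|].
    replace (E / al) with (p * E) in Hc' by (unfold p; field; lra).
    assert (c * (p * y * exp (p * E)) = p * E * exp (p * E) * Rpower c (1 - al))
      by (rewrite Hcv at 1; unfold y; field; lra).
    lra. }
  rewrite <- (Rpower_1 (v + E)) by lra.
  replace 1 with (p * al) by (unfold p; field; lra).
  rewrite <- Rpower_mult. apply Rle_Rpower_l; [lra|].
  split; [apply Rpower_pos | exact Hroot].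
Qed.

Lemma linear_growth_of_steps (f : nat -> R) (E : R) (q : nat) :
  (forall k, (q <= k)%nat -> f k + E <= f (S k)) ->
  forall m, f q + E * INR m <= f (q + m)%nat.
Proof.
  intros Hstep m. induction m as [|m IH].
  - rewrite Nat.add_0_r. simpl. lra.
  - rewrite S_INR, Nat.add_succ_r.
    pose proof (Hstep (q + m)%nat ltac:(lia)). lra.
Qed.

Lemma Rpower_le_bseq_pos tau alpha x j : 0 < alpha -> 0 < tau -> (0 < j)%nat ->
  0 < x -> x <= bseq tau alpha j -> Rpower x alpha <= Rpower tau alpha * INR j.
Proof.
  intros Hal Htau Hj Hx Hb.
  unfold bseq in Hb. destruct (Rlt_dec 0 alpha) as [_|]; [|lra].
  assert (Hj' : 0 < INR j) by (apply lt_0_INR; exact Hj).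
  apply Rle_trans with (Rpower (tau * Rpower (INR j) (1 / alpha)) alpha).
  - apply Rle_Rpower_l; lra.
  - rewrite <- Rpower_mult_distr by (auto using Rpower_pos).
    rewrite Rpower_mult. replace (1 / alpha * alpha) with 1 by (field; lra).
    rewrite Rpower_1 by exact Hj'. lra.
Qed.

Lemma ln_le_bseq_0 tau x j : 0 < x -> x <= bseq tau 0 j -> ln x <= tau * INR j.
Proof.
  intros Hx Hb. unfold bseq in Hb. destruct (Rlt_dec 0 0) as [|_]; [lra|].
  rewrite <- (ln_exp (tau * INR j)). apply ln_le; assumption.
Qed.

Definition excess (a : nat -> R) (k : nat) : R := a k - INR k.

Lemma exists_small_jump (alpha C : R) (q : nat) (a : nat -> R) :
  ~ (forall k, (q <= k)%nat -> C * Rpower (excess a k) (1 - alpha) < a (S k) - a k) ->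
  exists k, (q <= k)%nat /\ a (S k) - a k <= C * Rpower (a k - INR k) (1 - alpha).
Proof.
  intros Hnot. apply NNPP. intros Hnone. apply Hnot. intros k Hk.
  apply Rnot_le_lt. intros Hsmall. apply Hnone. exists k. split; assumption.
Qed.

Section LargeJumps.

Variables (tau : R) (q : nat) (a : nat -> R).
Hypothesis tau_pos : 0 < tau.
Hypothesis a_floor : forall j, (q <= j)%nat -> INR j + 1 <= a j.

Lemma excess_ge_1 k : (q <= k)%nat -> 1 <= excess a k.
Proof. intros Hk. pose proof (a_floor k Hk). unfold excess. lra. Qed.

(* [excess a] loses exactly 1 per step, which [c^(1-alpha) >= 1] absorbs. *)
Lemma excess_step alpha C k : alpha <= 1 -> (q <= k)%nat ->
  C * Rpower (excess a k) (1 - alpha) < a (S k) - a k ->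
  excess a k + (C - 1) * Rpower (excess a k) (1 - alpha) <= excess a (S k).
Proof.
  intros Hal Hk Hjump.
  assert (1 <= Rpower (excess a k) (1 - alpha))
    by (apply Rpower_ge_1; [apply excess_ge_1; exact Hk | lra]).
  unfold excess in *. rewrite S_INR. lra.
Qed.

Lemma no_large_jumps_pos alpha : 0 < alpha -> alpha < 1 -> (1 <= q)%nat ->
  (forall j, (q <= j)%nat -> a j <= bseq tau alpha j) ->
  ~ (forall k, (q <= k)%nat ->
       (2 * Rpower tau alpha / alpha * exp (2 * Rpower tau alpha / alpha) + 1)
         * Rpower (excess a k) (1 - alpha) < a (S k) - a k).
Proof.
  intros Hal0 Hal1 Hq a_upper a_jumps.
  set (E := 2 * Rpower tau alpha).
  assert (HE : 0 < E) by (pose proof (Rpower_pos tau alpha); unfold E; lra).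
  assert (Hgrowth : forall m, Rpower (excess a q) alpha + E * INR m
                              <= Rpower (excess a (q + m)) alpha).
  { apply (linear_growth_of_steps (fun k => Rpower (excess a k) alpha)). intros k Hk.
    apply Rpower_increment; [lra | lra | apply excess_ge_1; exact Hk|].
    pose proof (excess_step alpha _ k ltac:(lra) Hk (a_jumps k Hk)) as Hstep.
    fold E in Hstep. lra. }
  assert (Hlow := Hgrowth q).
  assert (1 <= Rpower (excess a q) alpha)
    by (apply Rpower_ge_1; [apply excess_ge_1; lia | lra]).
  assert (Hhigh : Rpower (excess a (q + q)) alpha <= Rpower tau alpha * INR (q + q)).
  { assert (1 <= excess a (q + q)) by (apply excess_ge_1; lia).
    apply Rpower_le_bseq_pos; [lra | lra | lia | lra |].
    pose proof (a_upper (q + q)%nat ltac:(lia)). pose proof (pos_INR (q + q)).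
    unfold excess. lra. }
  rewrite plus_INR in Hhigh. unfold E in Hlow. lra.
Qed.

Lemma no_large_jumps_0 :
  (forall j, (q <= j)%nat -> a j <= bseq tau 0 j) ->
  ~ (forall k, (q <= k)%nat ->
       exp (2 * tau) * Rpower (excess a k) (1 - 0) < a (S k) - a k).
Proof.
  intros a_upper a_jumps.
  assert (Hgrowth : forall m, ln (excess a q) + 2 * tau * INR m <= ln (excess a (q + m))).
  { apply (linear_growth_of_steps (fun k => ln (excess a k))). intros k Hk.
    assert (Hc : 1 <= excess a k) by (apply excess_ge_1; exact Hk).
    pose proof (excess_step 0 _ k ltac:(lra) Hk (a_jumps k Hk)) as Hstep.
    rewrite Rminus_0_r, Rpower_1 in Hstep by lra.
    rewrite <- (ln_exp (2 * tau)), <- ln_mult by (try apply exp_pos; lra).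
    apply ln_le; [pose proof (exp_pos (2 * tau)); nra | lra]. }
  assert (Hlow := Hgrowth (S q)).
  assert (0 <= ln (excess a q))
    by (rewrite <- ln_1; apply ln_le; [lra | apply excess_ge_1; lia]).
  assert (Hhigh : ln (excess a (q + S q)) <= tau * INR (q + S q)).
  { assert (1 <= excess a (q + S q)) by (apply excess_ge_1; lia).
    apply ln_le_bseq_0; [lra|].
    pose proof (a_upper (q + S q)%nat ltac:(lia)). pose proof (pos_INR (q + S q)).
    unfold excess. lra. }
  rewrite plus_INR, S_INR in *. nra.
Qed.

End LargeJumps.

Theorem lemma3p4 (alpha tau : R) (Halpha0 : 0 <= alpha) (Halpha1 : alpha < 1)
  (Htau : 0 < tau) :
  exists C : R, 0 < C /\
    forall (q : nat) (a : nat -> R),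
      (1 <= q)%nat ->
      (forall j : nat, (q <= j)%nat -> 0 < a j) ->
      (forall j : nat, (q <= j)%nat -> a j <= a (S j)) ->
      (forall j : nat, (q <= j)%nat -> INR j + 1 <= a j <= bseq tau alpha j) ->
      exists k : nat, (q <= k)%nat /\
        a (S k) - a k <= C * Rpower (a k - INR k) (1 - alpha).
Proof.
  destruct (Rlt_dec 0 alpha) as [Hpos | Hnpos].
  - set (E := 2 * Rpower tau alpha).
    assert (0 < E) by (pose proof (Rpower_pos tau alpha); unfold E; lra).
    assert (0 < E / alpha * exp (E / alpha))
      by (apply Rmult_lt_0_compat; [apply Rdiv_lt_0_compat | apply exp_pos]; lra).
    exists (E / alpha * exp (E / alpha) + 1). split; [lra|].
    intros q a Hq _ _ Hbounds. apply exists_small_jump.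
    apply no_large_jumps_pos; try assumption; intros j Hj; apply Hbounds, Hj.
  - replace alpha with 0 in * by lra.
    exists (exp (2 * tau)). split; [apply exp_pos|].
    intros q a Hq _ _ Hbounds. apply exists_small_jump.
    apply no_large_jumps_0; try assumption; intros j Hj; apply Hbounds, Hj.
Qed.
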